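(* Assume $N>2m$, where $m=\max_{i\in\mathcal{B}}r_i$, and let $\delta=N/m$. Let $p=\sum_{i}v_ix_i$ be the value of the output of Algorithm 1 (described below), and let $\mathrm{OPT}$ be the optimal value of the WDP. Then $p\ge \alpha\cdot\mathrm{OPT}$, where $\alpha=\frac{\delta-2}{\delta e-2}$.
   Context: Setting: a finite set of bidders $\mathcal{B}=\mathcal{B}_r\cup\mathcal{B}_u$ (disjoint), indexed $1,\dots,|\mathcal{B}|$, and $N$ resource blocks $k=1,\dots,N$. Each bidder $i$ has a bid $(r_i,v_i)$ with $r_i$ a positive integer and $v_i\ge 0$. The WDP is: maximize $\sum_i v_i x_i$ subject to $\sum_k a_{ik}=r_ix_i$ for $1\le i\le|\mathcal{B}|$; $\sum_{i=1}^{|\mathcal{B}|+1}a_{ik}\le1$ for all $k$; $\sum_k a_{ik}\le\sum_k a_{|\mathcal{B}|+1,k}$ for $i\in\mathcal{B}_r$; $a_{ik},x_i\in\{0,1\}$. The index $|\mathcal{B}|+1$ denotes reserved RBs. Algorithm 1: 1. Initialize $x_i=0$ for all $i$, $\mathcal{C}=\emptyset$, $p=0$, $t=0$, $\lambda^0=1/N$. 2. While $\mathcal{C}\ne\mathcal{B}$ and $N\lambda^t\le\exp(\delta-2)$: (a) pick $\mu=\arg\max_{i\in\mathcal{B}\setminus\mathcal{C}}v_i/r_i$; (b) set $x_\mu=1$, $p\leftarrow p+v_\mu$ and $\mathcal{C}\leftarrow\mathcal{C}\cup\{\mu\}$; (c) set $\lambda^{t+1}=\lambda^t\exp(\delta-2)^{r_\mu/(N-2m)}$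 and $t\leftarrow t+1$. *)

From HB Require Import structures.
From mathcomp Require Import all_boot all_order all_algebra.
From mathcomp Require Import all_classical all_reals all_analysis.
Set Implicit Arguments. Unset Strict Implicit. Unset Printing Implicit Defensive.
Import Order.TTheory GRing.Theory Num.Theory.
Local Open Scope ring_scope.

(* Bidders are 'I_n (n = |B|), resource blocks are 'I_N.
   resv i = true  iff  i \in B_r  (otherwise i \in B_u).
   The allocation matrix a_{ik} for bidders is [a (i,k)], and the row
   |B|+1 of reserved RBs is [ar k]. *)
Definition feasible (n N : nat) (r : 'I_n -> nat) (resv : 'I_n -> bool)
  (x : {ffun 'I_n -> bool}) (a : {ffun 'I_n * 'I_N -> bool})
  (ar : {ffun 'I_N -> bool}) : bool :=
  [&& [forall i, (\sum_(k < N) a (i, k) == r i * x i)%N],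
      [forall k, (\sum_(i < n) a (i, k) + ar k <= 1)%N] &
      [forall i, resv i ==> (\sum_(k < N) a (i, k) <= \sum_(k < N) ar k)%N]].

Definition wdp_value (R : realType) (n : nat) (v : 'I_n -> R)
  (x : {ffun 'I_n -> bool}) : R := \sum_(i < n) (x i)%:R * v i.

Definition OPT (R : realType) (n N : nat) (r : 'I_n -> nat)
  (resv : 'I_n -> bool) (v : 'I_n -> R) : R :=
  \big[Num.max/0]_(c : {ffun 'I_n -> bool} * {ffun 'I_n * 'I_N -> bool}
                       * {ffun 'I_N -> bool} | feasible r resv c.1.1 c.1.2 c.2)
     wdp_value v c.1.1.

Definition mmax (n : nat) (r : 'I_n -> nat) : nat := \max_(i < n) r i.
Definition delta (R : realType) (n N : nat) (r : 'I_n -> nat) : R :=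
  N%:R / (mmax r)%:R.

Definition lam (R : realType) (n N : nat) (r : 'I_n -> nat) (s : seq 'I_n) : R :=
  foldl (fun l mu => l * (expR (delta R N r - 2)
            `^ ((r mu)%:R / (N%:R - 2 * (mmax r)%:R)))) (N%:R)^-1 s.

Definition guard (R : realType) (n N : nat) (r : 'I_n -> nat) (s : seq 'I_n) : bool :=
  N%:R * lam R N r s <= expR (delta R N r - 2).

(* s is the sequence of bidders picked (in order) by some execution of
   Algorithm 1 (any tie-breaking in the argmax). *)
Definition alg1_run (R : realType) (n N : nat) (r : 'I_n -> nat)
  (v : 'I_n -> R) (s : seq 'I_n) : Prop :=
  uniq s /\
  (forall t, (t < size s)%N ->
     (~~ [forall j, j \in take t s]) /\ guard R N r (take t s) /\
     (forall j, j \notin take t s ->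
        v j / (r j)%:R <= v (nth j s t) / (r (nth j s t))%:R)) /\
  ([forall j, j \in s] \/ ~~ guard R N r s).

Definition alg_value (R : realType) (n : nat) (v : 'I_n -> R) (s : seq 'I_n) : R :=
  \sum_(i <- s) v i.

(* Unrolling lambda, the loop guard says that the bidders picked so far
   request at most N - 2m blocks in total.  If the algorithm stops with bidders
   left over, the picked ones request more than N - 2m blocks.  Let d be the
   value density v_i / r_i of the last bidder picked: by the greedy order every
   picked bidder has density at least d and every other one at most d.  Hence
   p >= d * sum r_i over the picked bidders, while the fractional knapsack
   bound with capacity N (each block serves at most one bidder) gives
   OPT <= p + d (N - sum r_i).  Together, OPT (N - 2m) <= p N, and
   (N - 2m) / N >= (delta - 2) / (delta e - 2) since N (e - 1) >= 2m. *)

From HB Require Import structures.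
From mathcomp Require Import all_boot all_order all_algebra.
From mathcomp Require Import all_classical all_reals all_analysis.
From mathcomp Require Import ring lra.
Set Implicit Arguments. Unset Strict Implicit. Unset Printing Implicit Defensive.
Import Order.TTheory GRing.Theory Num.Theory.
Local Open Scope ring_scope.

Lemma foldl_mul_powR_expR (R : realType) (T : Type) (c D : R) (f : T -> R)
    (l : R) (s : seq T) :
  foldl (fun l t => l * expR c `^ (f t / D)) l s =
  l * expR (c * (\sum_(t <- s) f t) / D).
Proof.
elim: s l => [|t s IHs] l /=; first by rewrite big_nil mulr0 mul0r expR0 mulr1.
rewrite IHs big_cons /powR gt_eqF ?expR_gt0 // expRK -mulrA -expRD.
by congr (_ * expR _); lra.
Qed.

Section FractionalKnapsack.
Variables (R : realFieldType) (I : finType) (w : I -> nat) (v : I -> R).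

Lemma fractional_knapsack_bound (S : pred I) (d : R) (x : I -> bool) :
  {in S, forall i, d * (w i)%:R <= v i} ->
  {in predC S, forall i, v i <= d * (w i)%:R} ->
  \sum_i (x i)%:R * v i <=
    \sum_(i in S) v i + d * ((\sum_i w i * x i)%:R - (\sum_(i in S) w i)%:R).
Proof.
move=> dens_in dens_out.
rewrite !natr_sum !(big_mkcond (mem S)) -sumrB mulr_sumr -big_split /=.
apply: ler_sum => i _.
case: (boolP (i \in S)) => iS; case: (x i); rewrite ?muln1 ?muln0 /=.
- by rewrite mul1r subrr mulr0 addr0.
- by rewrite mul0r sub0r mulrN subr_ge0 dens_in.
- by rewrite mul1r subr0 add0r dens_out.
- by rewrite mul0r subrr mulr0 addr0.
Qed.

End FractionalKnapsack.

Lemma knapsack_ratio_arith (R : realFieldType) (O p d w D C : R) :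
  0 <= O -> 0 <= d -> 0 <= D -> D <= w -> D <= C ->
  d * w <= p -> O <= p + d * (C - w) -> O * D <= p * C.
Proof.
move=> O0 d0 D0 Dw DC dwp Ole.
have p0 : 0 <= p by apply: le_trans dwp; rewrite mulr_ge0 // (le_trans D0).
have [wC|Cw] := leP C w.
  have Op : O <= p by apply: le_trans Ole _; rewrite gerDl mulr_ge0_le0 // subr_le0.
  by apply: le_trans (ler_wpM2r D0 Op) _; rewrite ler_wpM2l.
have Ow : O * w <= p * C.
  apply: le_trans (ler_wpM2r (le_trans D0 Dw) Ole) _.
  have : d * w * (C - w) <= p * (C - w) by rewrite ler_wpM2r // subr_ge0 ltW.
  lra.
by apply: le_trans Ow; rewrite ler_wpM2l.
Qed.

Lemma feasible_capacity (n N : nat) (r : 'I_n -> nat) (resv : 'I_n -> bool)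
    (x : {ffun 'I_n -> bool}) (a : {ffun 'I_n * 'I_N -> bool})
    (ar : {ffun 'I_N -> bool}) :
  feasible r resv x a ar -> (\sum_i r i * x i <= N)%N.
Proof.
case/and3P => /forallP row_sum /forallP col_sum _.
rewrite (eq_bigr (fun i => \sum_(k < N) a (i, k))%N); last first.
  by move=> i _; rewrite (eqP (row_sum i)).
rewrite exchange_big /= -[leqRHS]card_ord -sum1_card.
by apply: leq_sum => k _; apply: leq_trans (col_sum k); apply: leq_addr.
Qed.

Section Greedy.
Variables (R : realType) (n N : nat) (r : 'I_n -> nat) (resv : 'I_n -> bool).
Variable v : 'I_n -> R.
Hypothesis r_gt0 : forall i, (0 < r i)%N.
Hypothesis v_ge0 : forall i, 0 <= v i.

Lemma OPT_ge0 : 0 <= OPT N r resv v.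
Proof.
rewrite /OPT; elim/big_ind: _ => // [x y x0 y0|c _]; first by rewrite le_max x0.
by rewrite sumr_ge0 // => i _; rewrite mulr_ge0.
Qed.

Lemma OPT_le (B : R) : 0 <= B ->
  (forall x (a : {ffun 'I_n * 'I_N -> bool}) ar,
     feasible r resv x a ar -> wdp_value v x <= B) ->
  OPT N r resv v <= B.
Proof. by move=> B0 ub; apply: bigmax_le => // c /ub. Qed.

Lemma delta_gt2 : (0 < mmax r)%N -> (2 * mmax r < N)%N -> 2 < delta R N r.
Proof. by move=> m_gt0 N_gt; rewrite /delta ltr_pdivlMr ?ltr0n // -natrM ltr_nat. Qed.

Lemma guardE (s : seq 'I_n) : (0 < mmax r)%N -> (2 * mmax r < N)%N ->
  guard R N r s = ((\sum_(i <- s) r i)%:R <= N%:R - 2 * (mmax r)%:R :> R).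
Proof.
move=> m_gt0 N_gt; have D_gt0 : 0 < N%:R - 2 * (mmax r)%:R :> R.
  by rewrite subr_gt0 -natrM ltr_nat.
rewrite /guard /lam (foldl_mul_powR_expR _ _ (fun i => (r i)%:R)) -natr_sum.
rewrite mulrA mulfV ?pnatr_eq0 -?lt0n ?(leq_ltn_trans _ N_gt) // mul1r ler_expR.
by rewrite -mulrA ger_pMr ?subr_gt0 ?delta_gt2 // ler_pdivrMr // mul1r.
Qed.

Definition density (i : 'I_n) : R := v i / (r i)%:R.

Lemma alg1_run_density_out (s : seq 'I_n) (l : 'I_n) :
  alg1_run N r v (rcons s l) -> forall j, j \notin rcons s l -> density j <= density l.
Proof.
case=> _ [step _] j j_out.
have := step (size s); rewrite size_rcons ltnSn => /(_ isT) [_ [_]].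
rewrite -cats1 take_size_cat // => /(_ j); rewrite nth_cat ltnn subnn /=; apply.
by apply: contra j_out; rewrite mem_rcons inE => ->; rewrite orbT.
Qed.

Lemma alg1_run_density_in (s : seq 'I_n) (l : 'I_n) :
  alg1_run N r v (rcons s l) -> {in rcons s l, forall i, density l <= density i}.
Proof.
case=> uniq_sl [step _] i; rewrite mem_rcons inE => /predU1P [->//|i_in].
have t_lt : (index i s < size s)%N by rewrite index_mem.
have := step (index i s); rewrite size_rcons ltnS ltnW // => /(_ isT) [_ [_ /(_ l)]].
rewrite -cats1 (takel_cat _ (ltnW t_lt)) nth_cat t_lt nth_index //; apply.
move: uniq_sl; rewrite rcons_uniq => /andP [l_out _].
by apply: contra l_out; apply: mem_take.
Qed.

Lemma alg_value_ge_density (s : seq 'I_n) (d : R) :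
  {in s, forall i, d <= density i} -> d * (\sum_(i <- s) r i)%:R <= alg_value v s.
Proof.
move=> dens_in; rewrite natr_sum mulr_sumr /alg_value !big_seq.
by apply: ler_sum => i /dens_in; rewrite ler_pdivlMr ?ltr0n.
Qed.

Lemma OPT_le_greedy (s : seq 'I_n) (d : R) : uniq s -> 0 <= d ->
  {in s, forall i, d <= density i} -> (forall j, j \notin s -> density j <= d) ->
  OPT N r resv v <= alg_value v s + d * (N%:R - (\sum_(i <- s) r i)%:R).
Proof.
move=> uniq_s d_ge0 dens_in dens_out.
have value_ge := alg_value_ge_density dens_in.
apply: OPT_le => [|x a ar feas].
  have : 0 <= d * N%:R by rewrite mulr_ge0.
  by rewrite mulrBr; lra.
rewrite /wdp_value /alg_value !(big_uniq _ uniq_s).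
apply: le_trans
  (fractional_knapsack_bound (w := r) (S := [pred i | i \in s]) (d := d) x _ _) _.
- by move=> i /dens_in; rewrite -ler_pdivlMr ?ltr0n.
- by move=> j /dens_out; rewrite ler_pdivrMr ?ltr0n.
by rewrite lerD2l ler_wpM2l // lerB // ler_nat (feasible_capacity feas).
Qed.

Lemma alg1_run_OPT_bound (s : seq 'I_n) :
  (2 * mmax r < N)%N -> alg1_run N r v s ->
  OPT N r resv v * (N%:R - 2 * (mmax r)%:R) <= alg_value v s * N%:R.
Proof.
move=> N_gt run; have [uniq_s [_ stop]] := run.
have D_ge0 : 0 <= N%:R - 2 * (mmax r)%:R :> R.
  by rewrite subr_ge0 -natrM ler_nat ltnW.
have D_le : N%:R - 2 * (mmax r)%:R <= N%:R :> R by rewrite gerBl.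
have p_ge0 : 0 <= alg_value v s by apply: sumr_ge0.
have [all_in|/forallPn [j0 j0_out]] := boolP [forall j, j \in s].
  have OPT_le_p : OPT N r resv v <= alg_value v s.
    rewrite -[leRHS]addr0 -(mul0r (N%:R - (\sum_(i <- s) r i)%:R)).
    apply: OPT_le_greedy => // [i _|j]; first by rewrite divr_ge0.
    by rewrite (forallP all_in).
  apply: le_trans (ler_wpM2r D_ge0 OPT_le_p) _.
  by rewrite ler_wpM2l.
have m_gt0 : (0 < mmax r)%N by apply: leq_trans (r_gt0 j0) (leq_bigmax j0).
have : ~~ guard R N r s by case: stop => // /forallP /(_ j0); rewrite (negbTE j0_out).
rewrite guardE // -ltNge; case/lastP: s run uniq_s {j0_out stop p_ge0} => [|s l].
  by rewrite big_nil ltNge D_ge0.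
move=> run uniq_s overflow.
have dens_in := alg1_run_density_in run; have dens_out := alg1_run_density_out run.
have d_ge0 : 0 <= density l by rewrite divr_ge0.
apply: (knapsack_ratio_arith OPT_ge0 d_ge0 D_ge0 (ltW overflow) D_le).
  exact: alg_value_ge_density.
exact: OPT_le_greedy.
Qed.

End Greedy.

Lemma approx_ratio_of_bound (R : realType) (n N : nat) (r : 'I_n -> nat) (O p : R) :
  (2 * mmax r < N)%N -> 0 <= p ->
  O * (N%:R - 2 * (mmax r)%:R) <= p * N%:R ->
  (delta R N r - 2) / (delta R N r * expR 1 - 2) * O <= p.
Proof.
move=> N_gt p_ge0 bound.
have N_gt0 : 0 < N%:R :> R by rewrite ltr0n (leq_ltn_trans _ N_gt).
have [m0|m_gt0] := posnP (mmax r).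
  (* [delta] divides by [mmax r = 0] and is then 0, making the ratio 1. *)
  move: bound; rewrite /delta m0 /= invr0 !mulr0 mul0r subr0 !sub0r.
  by rewrite divff ?oppr_eq0 ?pnatr_eq0 // mul1r ler_pM2r.
have e_ge2 : 2 <= expR 1 :> R by have := expR_ge1Dx (1 : R); lra.
have m_gt0R : 0 < (mmax r)%:R :> R by rewrite ltr0n.
have D_gt0 : 0 < N%:R - 2 * (mmax r)%:R :> R by rewrite subr_gt0 -natrM ltr_nat.
have Ne_ge : 2 * N%:R <= N%:R * expR 1 :> R by rewrite mulrC ler_wpM2l // ltW.
have K_gt0 : 0 < N%:R * expR 1 - 2 * (mmax r)%:R :> R by lra.
have alphaK : (delta R N r - 2) / (delta R N r * expR 1 - 2) *
    (N%:R * expR 1 - 2 * (mmax r)%:R) = N%:R - 2 * (mmax r)%:R.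
  rewrite /delta; field.
  by rewrite mulNr !lt0r_neq0.
rewrite -(ler_pM2r K_gt0) mulrAC alphaK mulrC.
by apply: le_trans bound _; rewrite ler_wpM2l //; lra.
Qed.

Theorem theorem4 (R : realType) (n N : nat) (r : 'I_n -> nat)
  (resv : 'I_n -> bool) (v : 'I_n -> R) (s : seq 'I_n) :
  (forall i, (0 < r i)%N) ->
  (forall i, 0 <= v i) ->
  (2 * mmax r < N)%N ->
  alg1_run N r v s ->
  alg_value v s >=
    (delta R N r - 2) / (delta R N r * expR 1 - 2) * OPT N r resv v.
Proof.
move=> r_gt0 v_ge0 N_gt run.
apply: approx_ratio_of_bound N_gt _ (alg1_run_OPT_bound resv r_gt0 v_ge0 N_gt run).
exact: sumr_ge0.
Qed.
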